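(* Let $\Gamma$ be a group of compactly supported homeomorphisms of $\mathbb{R}$ that contains $F'$, with $F$ and $F'$ as in the context. Then the commutator subgroup $\Gamma'$ is simple.
   Context: $F$ denotes the group of homeomorphisms of $\mathbb{R}$ generated by the following two maps: - $a(t)=t+1$; - $b$, where $b(t)=t$ for $t\le 0$, $b(t)=t/(1-t)$ for $0\le t\le 1/2$, $b(t)=(3t-1)/t$ for $1/2\le t\le 1$, and $b(t)=t+1$ for $t\ge 1$. This $F$ is a copy of Thompson's group $F$ acting on the real line, and $F'$ is its commutator subgroup. *)

From Stdlib Require Import Reals.
Open Scope R_scope.

Definition homeo (f : R -> R) : Prop :=
  continuity f /\
  exists g : R -> R, continuity g /\ (forall x, g (f x) = x) /\ (forall x, f (g x) = x).

(* Compact support: the closure of {t | f t <> t} is compact, i.e. bounded. *)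
Definition compactly_supported (f : R -> R) : Prop :=
  exists M : R, forall t, M < Rabs t -> f t = t.

Definition is_subgroup (H : (R -> R) -> Prop) : Prop :=
  (forall f, H f -> homeo f) /\
  H (fun x => x) /\
  (forall f g, H f -> H g -> H (fun x => f (g x))) /\
  (forall f, H f -> exists g, H g /\ (forall x, g (f x) = x) /\ (forall x, f (g x) = x)).

Definition gen (S : (R -> R) -> Prop) (f : R -> R) : Prop :=
  forall H, is_subgroup H -> (forall s, S s -> H s) -> H f.

Definition commutators (H : (R -> R) -> Prop) (f : R -> R) : Prop :=
  exists g gi h hi : R -> R,
    H g /\ H h /\
    (forall x, gi (g x) = x) /\ (forall x, g (gi x) = x) /\
    (forall x, hi (h x) = x) /\ (forall x, h (hi x) = x) /\
    f = (fun x => gi (hi (g (h x)))).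

Definition comm_subgroup (H : (R -> R) -> Prop) : (R -> R) -> Prop :=
  gen (commutators H).

Definition normal_in (N G : (R -> R) -> Prop) : Prop :=
  is_subgroup N /\ (forall f, N f -> G f) /\
  (forall g gi n, G g -> (forall x, gi (g x) = x) -> (forall x, g (gi x) = x) ->
     N n -> N (fun x => gi (n (g x)))).

Definition simple_group (G : (R -> R) -> Prop) : Prop :=
  (exists f, G f /\ f <> (fun x => x)) /\
  (forall N, normal_in N G ->
     (forall f, N f -> f = (fun x => x)) \/ (forall f, G f -> N f)).

Definition a_gen (t : R) : R := t + 1.

Definition b_gen (t : R) : R :=
  if Rle_dec t 0 then t
  else if Rle_dec t (1/2) then t / (1 - t)
  else if Rle_dec t 1 then (3 * t - 1) / t
  else t + 1.

Definition F_thompson : (R -> R) -> Prop :=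
  gen (fun f => f = a_gen \/ f = b_gen).

Definition F_comm : (R -> R) -> Prop := comm_subgroup F_thompson.

(* Since [F'] lies in [Gamma], the group [Gamma'] contains, for every compact window and every
   point [x], an element squeezing the window into any neighbourhood of [x]. For [F'] this holds
   at [x = 0] (iterates of [b^-1] and of a translate of it contract towards 0), and the set of
   such [x] is closed and invariant under [a] and [b^-1], hence everything, because [b^-1]
   contracts [[0,2]] onto [[0,1]]. An element of [Gamma] agrees on a compact set with a
   commutator [p r^-1 p^-1 r], where [r] pushes the set off the support of [p].
   Let [N] be a nontrivial normal subgroup of [Gamma'] and [n] in [N] displace an interval [U].
   Conjugating into [U], Higman's argument puts every commutator of [Gamma'] in [N]. Finally a
   commutator [[g,h]] of [Gamma] equals [[g Y, h Z]] for corrections [Y], [Z] with supports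
   disjoint from each other and from those of [g], [h], chosen so that [g Y], [h Z] lie in
   [Gamma']; so [N] contains the generators of [Gamma']. *)

From Stdlib Require Import Reals Lra Psatz Classical FunctionalExtensionality.
Open Scope R_scope.

Lemma left_inverse_unique (f g g' : R -> R) :
  (forall x, g (f x) = x) -> (forall x, f (g' x) = x) -> g = g'.
Proof.
  intros Hg Hg'; apply functional_extensionality; intro x.
  rewrite <- (Hg' x) at 1; apply Hg.
Qed.

Section Subgroup.
Variable H : (R -> R) -> Prop.
Hypothesis HH : is_subgroup H.

Lemma subgroup_comp f g : H f -> H g -> H (fun x => f (g x)).
Proof. destruct HH as [_ [_ [Hcomp _]]]; auto. Qed.

Lemma subgroup_has_inv f : H f ->
  exists fi, H fi /\ (forall x, fi (f x) = x) /\ (forall x, f (fi x) = x).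
Proof. destruct HH as [_ [_ [_ Hinv]]]; auto. Qed.

Lemma subgroup_inv f fi : H f ->
  (forall x, fi (f x) = x) -> (forall x, f (fi x) = x) -> H fi.
Proof.
  intros Hf Hfi1 Hfi2.
  destruct (subgroup_has_inv f Hf) as [g [Hg [Hg1 _]]].
  now rewrite <- (left_inverse_unique f g fi Hg1 Hfi2).
Qed.

Lemma commutators_sub f : commutators H f -> H f.
Proof.
  intros [g [gi [h [hi [Hg [Hh [Eg1 [Eg2 [Eh1 [Eh2 ->]]]]]]]]]].
  apply subgroup_comp; [now apply (subgroup_inv g)|].
  apply subgroup_comp; [now apply (subgroup_inv h)|].
  now apply subgroup_comp.
Qed.

End Subgroup.

Lemma commutators_conj (H : (R -> R) -> Prop) g gi f :
  (forall f1 f2, H f1 -> H f2 -> H (fun x => f1 (f2 x))) ->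
  H g -> H gi -> (forall x, gi (g x) = x) -> (forall x, g (gi x) = x) ->
  commutators H f -> commutators H (fun x => gi (f (g x))).
Proof.
  intros Hcomp Hg Hgi Eg1 Eg2 [x [xi [y [yi [Hx [Hy [Ex1 [Ex2 [Ey1 [Ey2 ->]]]]]]]]]].
  exists (fun t => gi (x (g t))), (fun t => gi (xi (g t))),
    (fun t => gi (y (g t))), (fun t => gi (yi (g t))).
  repeat split; auto; try (intros t; now rewrite Eg2, ?Ex1, ?Ex2, ?Ey1, ?Ey2, ?Eg1).
  apply functional_extensionality; intro t; now rewrite !Eg2.
Qed.

Lemma gen_incl S f : S f -> gen S f.
Proof. intros Hf H _ HS; auto. Qed.

Lemma gen_min S H f : is_subgroup H -> (forall s, S s -> H s) -> gen S f -> H f.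
Proof. intros HH HS Hf; now apply Hf. Qed.

Lemma gen_id S : gen S (fun x => x).
Proof. intros H [_ [Hid _]] _; exact Hid. Qed.

Lemma gen_comp S f g : gen S f -> gen S g -> gen S (fun x => f (g x)).
Proof. intros Hf Hg H HH HS; apply (subgroup_comp H HH); [apply Hf|apply Hg]; auto. Qed.

Lemma gen_inv S f fi : gen S f ->
  (forall x, fi (f x) = x) -> (forall x, f (fi x) = x) -> gen S fi.
Proof. intros Hf E1 E2 H HH HS; apply (subgroup_inv H HH f); auto; now apply Hf. Qed.

Lemma gen_is_subgroup S H0 : is_subgroup H0 -> (forall s, S s -> H0 s) ->
  is_subgroup (gen S).
Proof.
  intros HH0 HS; split; [|split; [apply gen_id|split; [apply gen_comp|]]].
  - intros f Hf; apply HH0, (gen_min S); auto.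
  - intros f Hf.
    destruct (subgroup_has_inv H0 HH0 f (gen_min S H0 f HH0 HS Hf)) as [g [_ [E1 E2]]].
    exists g; split; auto; now apply (gen_inv S f).
Qed.

(* The elements of [gen S] whose conjugate by [g] is again in [gen S] form a subgroup containing [S]. *)
Lemma gen_conj S H0 g gi f : is_subgroup H0 -> (forall s, S s -> H0 s) ->
  (forall x, gi (g x) = x) -> (forall x, g (gi x) = x) ->
  (forall s, S s -> S (fun x => gi (s (g x)))) ->
  gen S f -> gen S (fun x => gi (f (g x))).
Proof.
  intros HH0 HS Eg1 Eg2 HSc Hf.
  pose proof (gen_is_subgroup S H0 HH0 HS) as HgenS.
  set (K := fun f => gen S f /\ gen S (fun x => gi (f (g x)))).
  assert (HK : is_subgroup K).
  { split; [|split; [|split]].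
    - intros f1 [Hf1 _]; now apply (proj1 HgenS).
    - split; [apply gen_id|].
      replace (fun x => gi (g x)) with (fun x : R => x); [apply gen_id|].
      apply functional_extensionality; intro; now rewrite Eg1.
    - intros f1 f2 [Hf1 Hc1] [Hf2 Hc2]; split; [now apply gen_comp|].
      replace (fun x => gi (f1 (f2 (g x)))) with (fun x => gi (f1 (g (gi (f2 (g x))))));
        [now apply (gen_comp S (fun x => gi (f1 (g x))))|].
      apply functional_extensionality; intro; now rewrite Eg2.
    - intros f1 [Hf1 Hc1].
      destruct (subgroup_has_inv _ HgenS f1 Hf1) as [f1i [Hf1i [E1 E2]]].
      exists f1i; repeat split; auto.
      apply (gen_inv S (fun x => gi (f1 (g x)))); auto; intro x;
        now rewrite Eg2, ?E1, ?E2, Eg1. }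
  apply (gen_min S K f HK); auto.
  intros s Hs; split; apply gen_incl; auto.
Qed.

Lemma comm_subgroup_sub G f : is_subgroup G -> comm_subgroup G f -> G f.
Proof. intros HG; apply gen_min; auto; apply commutators_sub; auto. Qed.

Lemma comm_subgroup_is_subgroup G : is_subgroup G -> is_subgroup (comm_subgroup G).
Proof. intros HG; apply (gen_is_subgroup _ G HG), commutators_sub, HG. Qed.

Lemma commutator_agrees_on (H : (R -> R) -> Prop) (S : R -> Prop) q qi r ri :
  H qi -> H r ->
  (forall x, qi (q x) = x) -> (forall x, q (qi x) = x) ->
  (forall x, ri (r x) = x) -> (forall x, r (ri x) = x) ->
  (forall t, S t -> q (r t) = r t) ->
  exists p, commutators H p /\ forall t, S t -> p t = q t.
Proof.
  intros Hqi Hr Eq1 Eq2 Er1 Er2 Hfix.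
  exists (fun x => q (ri (qi (r x)))); split.
  - exists qi, q, r, ri; repeat split; auto.
  - intros t Ht; rewrite <- (Hfix t Ht) at 1; now rewrite Eq1, Er1.
Qed.

Lemma Rabs_le_between x e : Rabs x <= e -> - e <= x <= e.
Proof.
  intros H; pose proof (Rle_abs x); pose proof (Rle_abs (- x)).
  rewrite Rabs_Ropp in *; lra.
Qed.

(** * Supports and Higman's argument *)

Definition supported_in (U : R -> Prop) (f : R -> R) : Prop :=
  forall t, ~ U t -> f t = t.

Lemma supported_in_inv U f fi :
  supported_in U f -> (forall x, fi (f x) = x) -> supported_in U fi.
Proof. intros Hf E t Ht; rewrite <- (Hf t Ht) at 1; apply E. Qed.

Lemma supported_in_maps U f fi :
  supported_in U f -> (forall x, fi (f x) = x) -> forall t, U t -> U (f t).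
Proof.
  intros Hf E t Ht; apply NNPP; intro Hn.
  assert (Hfix : f t = t) by (rewrite <- (E (f t)), (Hf _ Hn); apply E).
  now rewrite Hfix in Hn.
Qed.

Lemma supported_in_conj S U p pi w :
  (forall x, p (pi x) = x) -> (forall t, S t -> U (p t)) ->
  supported_in S w -> supported_in U (fun x => p (w (pi x))).
Proof.
  intros E HSU Hw t Ht; destruct (classic (S (pi t))) as [Hs|Hs].
  - exfalso; apply Ht; rewrite <- (E t); auto.
  - now rewrite (Hw _ Hs).
Qed.

Lemma disjoint_supports_commute U V f fi g gi :
  (forall t, U t -> ~ V t) -> supported_in U f -> supported_in V g ->
  (forall x, fi (f x) = x) -> (forall x, gi (g x) = x) ->
  forall x, f (g x) = g (f x).
Proof.
  intros HUV Hf Hg Ef Eg x.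
  destruct (classic (U x)) as [Hx|Hx].
  - pose proof (supported_in_maps U f fi Hf Ef x Hx) as Hfx.
    now rewrite (Hg x), (Hg (f x)); auto.
  - destruct (classic (V x)) as [Hv|Hv].
    + pose proof (supported_in_maps V g gi Hg Eg x Hv) as Hgx.
      rewrite (Hf x Hx), (Hf (g x)); auto.
      intro Hu; exact (HUV _ Hu Hgx).
    + now rewrite (Hf x Hx), (Hg x Hv), (Hf x Hx).
Qed.

Lemma supported_in_interval f M K :
  (forall t, M < Rabs t -> f t = t) -> Rabs M <= K ->
  supported_in (fun t => -K <= t <= K) f.
Proof.
  intros Hf HK t Ht; apply Hf.
  destruct (Rle_dec (Rabs t) M); [|lra].
  exfalso; apply Ht; pose proof (Rle_abs M); apply Rabs_le_between; lra.
Qed.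

(* Higman's argument: [k = n^-1 f n] is supported in [n^-1 U], disjoint from [U], so it
   commutes with [g]; hence [c = f^-1 k] lies in [N] and [[f,g] = c g^-1 c^-1 g]. *)
Lemma commutator_in_normal_of_displaced (G N : (R -> R) -> Prop) (U : R -> Prop) n :
  normal_in N G -> N n -> (forall t, U t -> ~ U (n t)) ->
  forall f fi g gi, G f -> G g ->
  (forall x, fi (f x) = x) -> (forall x, f (fi x) = x) ->
  (forall x, gi (g x) = x) -> (forall x, g (gi x) = x) ->
  supported_in U f -> supported_in U g ->
  N (fun x => fi (gi (f (g x)))).
Proof.
  intros [HN [_ Hnorm]] Nn Hdisp f fi g gi Gf Gg Ef1 Ef2 Eg1 Eg2 Sf Sg.
  destruct (subgroup_has_inv N HN n Nn) as [ni [Nni [En1 En2]]].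
  set (c := fun x => fi (ni (f (n x)))).
  set (ci := fun x => ni (fi (n (f x)))).
  assert (Nc : N c) by (apply (subgroup_comp N HN (fun x => fi (ni (f x))) n); auto).
  assert (Nci : N ci) by (apply (subgroup_comp N HN ni (fun x => fi (n (f x)))); auto).
  assert (Nconj : N (fun x => gi (ci (g x)))) by (apply Hnorm; auto).
  assert (Sk : supported_in (fun t => U (n t)) (fun x => ni (f (n x)))).
  { intros t Ht; cbv beta; now rewrite Sf, En1. }
  assert (Commute : forall x, ni (f (n (gi x))) = gi (ni (f (n x)))).
  { intro x; symmetry.
    apply (disjoint_supports_commute U (fun t => U (n t)) gi g
             (fun x => ni (f (n x))) (fun x => ni (fi (n x))));
      auto; [now apply (supported_in_inv U g)|].
    intro x'; cbv beta; now rewrite En2, Ef1, En1. }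
  replace (fun x => fi (gi (f (g x)))) with (fun x => c (gi (ci (g x))));
    [now apply (subgroup_comp N HN c)|].
  apply functional_extensionality; intro x; unfold c, ci.
  now rewrite Commute, En2, Ef2, En1.
Qed.

Lemma commutator_of_disjoint_perturbations (S A B : R -> Prop)
  g gi h hi Y Yi Z Zi :
  (forall t, S t -> ~ A t) -> (forall t, S t -> ~ B t) -> (forall t, A t -> ~ B t) ->
  (forall x, gi (g x) = x) -> (forall x, g (gi x) = x) ->
  (forall x, hi (h x) = x) -> (forall x, h (hi x) = x) ->
  (forall x, Yi (Y x) = x) -> (forall x, Y (Yi x) = x) ->
  (forall x, Zi (Z x) = x) -> (forall x, Z (Zi x) = x) ->
  supported_in S g -> supported_in S h -> supported_in A Y -> supported_in B Z ->
  forall x, Yi (gi (Zi (hi (g (Y (h (Z x))))))) = gi (hi (g (h x))).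
Proof.
  intros SA SB AB Eg1 Eg2 Eh1 Eh2 EY1 EY2 EZ1 EZ2 Sg Sh SY SZ.
  assert (AS : forall t, A t -> ~ S t) by (intros t Ha Hs; exact (SA t Hs Ha)).
  assert (BS : forall t, B t -> ~ S t) by (intros t Hb Hs; exact (SB t Hs Hb)).
  assert (Sgi := supported_in_inv S g gi Sg Eg1).
  assert (Shi := supported_in_inv S h hi Sh Eh1).
  assert (SYi := supported_in_inv A Y Yi SY EY1).
  assert (SZi := supported_in_inv B Z Zi SZ EZ1).
  assert (CA : forall f fi, supported_in S f -> (forall x, fi (f x) = x) ->
                 forall x, Yi (f x) = f (Yi x))
    by (intros f fi Sf Ef; apply (disjoint_supports_commute A S Yi Y f fi); auto).
  assert (CB : forall f fi, supported_in S f -> (forall x, fi (f x) = x) ->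
                 forall x, Zi (f x) = f (Zi x))
    by (intros f fi Sf Ef; apply (disjoint_supports_commute B S Zi Z f fi); auto).
  assert (CAB : forall x, Yi (Zi x) = Zi (Yi x))
    by (apply (disjoint_supports_commute A B Yi Y Zi Z); auto).
  intro x.
  rewrite (CA gi g Sgi Eg2), CAB, (CA hi h Shi Eh2), (CA g gi Sg Eg1), EY1.
  now rewrite (CB hi h Shi Eh2), (CB g gi Sg Eg1), (CB h hi Sh Eh1), EZ1.
Qed.

(** * Thompson's group *)

Lemma Rdiv_le_l a b c : 0 < c -> a <= b * c -> a / c <= b.
Proof.
  intros Hc H; replace b with (b * c / c) by (field; lra).
  apply Rmult_le_compat_r; [left; now apply Rinv_0_lt_compat|exact H].
Qed.

Lemma Rdiv_le_r a b c : 0 < c -> b * c <= a -> b <= a / c.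
Proof.
  intros Hc H; replace b with (b * c / c) by (field; lra).
  apply Rmult_le_compat_r; [left; now apply Rinv_0_lt_compat|exact H].
Qed.

Lemma Rdiv_le_inv_succ d D c : 0 < c -> 0 <= d <= / c -> 1 + d <= D -> d / D <= / (c + 1).
Proof.
  intros Hc Hd HD.
  pose proof (Rinv_l c ltac:(lra)); pose proof (Rinv_l (c + 1) ltac:(lra)).
  pose proof (Rinv_0_lt_compat (c + 1) ltac:(lra)).
  apply Rdiv_le_l; nra.
Qed.

Lemma b_gen_nonpos t : t <= 0 -> b_gen t = t.
Proof. intros; unfold b_gen; destruct (Rle_dec t 0); lra. Qed.

Lemma b_gen_first t : 0 <= t <= 1/2 -> b_gen t = t / (1 - t).
Proof.
  intros; unfold b_gen; destruct (Rle_dec t 0).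
  - replace t with 0 by lra; field.
  - destruct (Rle_dec t (1/2)); [reflexivity|lra].
Qed.

Lemma b_gen_second t : 1/2 <= t <= 1 -> b_gen t = (3 * t - 1) / t.
Proof.
  intros; unfold b_gen; destruct (Rle_dec t 0); [lra|].
  destruct (Rle_dec t (1/2)); [replace t with (1/2) by lra; field|].
  destruct (Rle_dec t 1); [reflexivity|lra].
Qed.

Lemma b_gen_ge1 t : 1 <= t -> b_gen t = t + 1.
Proof.
  intros; unfold b_gen; destruct (Rle_dec t 0); [lra|].
  destruct (Rle_dec t (1/2)); [lra|].
  destruct (Rle_dec t 1); [replace t with 1 by lra; field|reflexivity].
Qed.

Definition b_inv (t : R) : R :=
  if Rle_dec t 0 then t
  else if Rle_dec t 1 then t / (1 + t)
  else if Rle_dec t 2 then 1 / (3 - t)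
  else t - 1.

Lemma b_inv_nonpos t : t <= 0 -> b_inv t = t.
Proof. intros; unfold b_inv; destruct (Rle_dec t 0); lra. Qed.

Lemma b_inv_first t : 0 <= t <= 1 -> b_inv t = t / (1 + t).
Proof.
  intros; unfold b_inv; destruct (Rle_dec t 0).
  - replace t with 0 by lra; field.
  - destruct (Rle_dec t 1); [reflexivity|lra].
Qed.

Lemma b_inv_second t : 1 <= t <= 2 -> b_inv t = 1 / (3 - t).
Proof.
  intros; unfold b_inv; destruct (Rle_dec t 0); [lra|].
  destruct (Rle_dec t 1); [replace t with 1 by lra; field|].
  destruct (Rle_dec t 2); [reflexivity|lra].
Qed.

Lemma b_inv_ge2 t : 2 <= t -> b_inv t = t - 1.
Proof.
  intros; unfold b_inv; destruct (Rle_dec t 0); [lra|].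
  destruct (Rle_dec t 1); [lra|].
  destruct (Rle_dec t 2); [replace t with 2 by lra; field|reflexivity].
Qed.

Lemma b_inv_zero : b_inv 0 = 0.
Proof. apply b_inv_nonpos; lra. Qed.

Lemma b_inv_one : b_inv 1 = 1 / 2.
Proof. rewrite b_inv_first by lra; field. Qed.

Lemma b_inv_two : b_inv 2 = 1.
Proof. rewrite b_inv_second by lra; field. Qed.

Lemma b_gen_b_inv t : b_gen (b_inv t) = t.
Proof.
  destruct (Rle_dec t 0); [now rewrite b_inv_nonpos, b_gen_nonpos|].
  destruct (Rle_dec t 1).
  - rewrite b_inv_first by lra.
    rewrite b_gen_first by (split; [apply Rdiv_le_r|apply Rdiv_le_l]; lra).
    field; lra.
  - destruct (Rle_dec t 2).
    + rewrite b_inv_second by lra.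
      rewrite b_gen_second by (split; [apply Rdiv_le_r|apply Rdiv_le_l]; lra).
      field; lra.
    + rewrite b_inv_ge2, b_gen_ge1 by lra; ring.
Qed.

Lemma b_inv_b_gen t : b_inv (b_gen t) = t.
Proof.
  destruct (Rle_dec t 0); [now rewrite b_gen_nonpos, b_inv_nonpos|].
  destruct (Rle_dec t (1/2)).
  - rewrite b_gen_first by lra.
    rewrite b_inv_first by (split; [apply Rdiv_le_r|apply Rdiv_le_l]; lra).
    field; lra.
  - destruct (Rle_dec t 1).
    + rewrite b_gen_second by lra.
      rewrite b_inv_second by (split; [apply Rdiv_le_r|apply Rdiv_le_l]; lra).
      field; split; lra.
    + rewrite b_gen_ge1, b_inv_ge2 by lra; ring.
Qed.

Lemma b_gen_displacement t : Rabs (b_gen t - t) <= 1.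
Proof.
  apply Rabs_le.
  destruct (Rle_dec t 0); [rewrite b_gen_nonpos; lra|].
  destruct (Rle_dec t (1/2)); [|destruct (Rle_dec t 1)].
  - rewrite b_gen_first by lra.
    assert (t <= t / (1 - t) <= t + 1) by (split; [apply Rdiv_le_r|apply Rdiv_le_l]; nra).
    lra.
  - rewrite b_gen_second by lra.
    assert (t <= (3 * t - 1) / t <= t + 1) by (split; [apply Rdiv_le_r|apply Rdiv_le_l]; nra).
    lra.
  - rewrite b_gen_ge1; lra.
Qed.

Lemma b_inv_mono_lip_piece y z : y <= z ->
  (z <= 0 \/ (0 <= y /\ z <= 1) \/ (1 <= y /\ z <= 2) \/ 2 <= y) ->
  0 <= b_inv z - b_inv y <= z - y.
Proof.
  intros Hyz [H|[H|[H|H]]].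
  - rewrite !b_inv_nonpos; lra.
  - rewrite !b_inv_first by lra.
    replace (z / (1 + z) - y / (1 + y)) with ((z - y) / ((1 + y) * (1 + z))) by (field; lra).
    assert (1 <= (1 + y) * (1 + z)) by nra.
    split; [apply Rdiv_le_r|apply Rdiv_le_l]; nra.
  - rewrite !b_inv_second by lra.
    replace (1 / (3 - z) - 1 / (3 - y)) with ((z - y) / ((3 - y) * (3 - z))) by (field; lra).
    assert (1 <= (3 - y) * (3 - z)) by nra.
    split; [apply Rdiv_le_r|apply Rdiv_le_l]; nra.
  - rewrite !b_inv_ge2; lra.
Qed.

Lemma b_inv_mono_lip y z : y <= z -> 0 <= b_inv z - b_inv y <= z - y.
Proof.
  assert (Hchain : forall y c z, 0 <= b_inv c - b_inv y <= c - y ->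
    0 <= b_inv z - b_inv c <= z - c -> 0 <= b_inv z - b_inv y <= z - y)
    by (intros; lra).
  assert (H1 : forall y z, y <= z <= 1 -> 0 <= b_inv z - b_inv y <= z - y).
  { intros y' z' Hz; destruct (Rle_dec z' 0); [apply b_inv_mono_lip_piece; lra|].
    destruct (Rle_dec y' 0); [apply (Hchain y' 0 z')|]; apply b_inv_mono_lip_piece; lra. }
  assert (H2 : forall y z, y <= z <= 2 -> 0 <= b_inv z - b_inv y <= z - y).
  { intros y' z' Hz; destruct (Rle_dec z' 1); [apply H1; lra|].
    destruct (Rle_dec y' 1); [apply (Hchain y' 1 z'); [apply H1; lra|]|];
      apply b_inv_mono_lip_piece; lra. }
  intros Hyz; destruct (Rle_dec z 2); [apply H2; lra|].
  destruct (Rle_dec y 2); [apply (Hchain y 2 z); [apply H2; lra|]|];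
    apply b_inv_mono_lip_piece; lra.
Qed.

Lemma b_inv_lipschitz y z : Rabs (b_inv y - b_inv z) <= Rabs (y - z).
Proof.
  destruct (Rle_dec y z).
  - pose proof (b_inv_mono_lip y z r); rewrite !Rabs_left1; lra.
  - pose proof (b_inv_mono_lip z y ltac:(lra)); rewrite !Rabs_right; lra.
Qed.

Lemma b_inv_contract_first u v c : 0 < c -> 0 <= u <= v -> v <= 1 -> v - u <= / c ->
  b_inv v - b_inv u <= / (c + 1).
Proof.
  intros Hc Huv Hv Hd; rewrite !b_inv_first by lra.
  replace (v / (1 + v) - u / (1 + u)) with ((v - u) / ((1 + u) * (1 + v))) by (field; lra).
  apply Rdiv_le_inv_succ; nra.
Qed.

Lemma b_inv_contract_second u v c : 0 < c -> 1 <= u <= v -> v <= 2 -> v - u <= / c ->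
  b_inv v - b_inv u <= / (c + 1).
Proof.
  intros Hc Huv Hv Hd; rewrite !b_inv_second by lra.
  replace (1 / (3 - v) - 1 / (3 - u)) with ((v - u) / ((3 - u) * (3 - v))) by (field; lra).
  apply Rdiv_le_inv_succ; nra.
Qed.

Definition a_inv (t : R) : R := t - 1.

(* [b_inv] recentred at [2]: supported in [[-2, 0]], it contracts the negative half-line towards 0. *)
Definition b_inv_neg (t : R) : R := a_inv (b_inv (a_gen (a_gen t))).

Definition b_gen_neg (t : R) : R := a_inv (a_inv (b_gen (a_gen t))).

Lemma F_a_gen : F_thompson a_gen.
Proof. apply gen_incl; auto. Qed.

Lemma F_b_gen : F_thompson b_gen.
Proof. apply gen_incl; auto. Qed.

Lemma F_a_inv : F_thompson a_inv.
Proof. apply (gen_inv _ a_gen); [exact F_a_gen| |]; intros; unfold a_inv, a_gen; ring. Qed.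

Lemma F_b_inv : F_thompson b_inv.
Proof. apply (gen_inv _ b_gen); [exact F_b_gen|apply b_inv_b_gen|apply b_gen_b_inv]. Qed.

Lemma F_b_gen_neg : F_thompson b_gen_neg.
Proof.
  apply (gen_comp _ a_inv); [exact F_a_inv|].
  apply (gen_comp _ a_inv); [exact F_a_inv|].
  exact (gen_comp _ _ _ F_b_gen F_a_gen).
Qed.

Lemma b_gen_neg_b_inv_neg t : b_gen_neg (b_inv_neg t) = t.
Proof.
  unfold b_gen_neg, b_inv_neg, a_inv, a_gen.
  replace (b_inv (t + 1 + 1) - 1 + 1) with (b_inv (t + 1 + 1)) by ring.
  rewrite b_gen_b_inv; ring.
Qed.

Lemma b_inv_neg_b_gen_neg t : b_inv_neg (b_gen_neg t) = t.
Proof.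
  unfold b_gen_neg, b_inv_neg, a_inv, a_gen.
  replace (b_gen (t + 1) - 1 - 1 + 1 + 1) with (b_gen (t + 1)) by ring.
  rewrite b_inv_b_gen; ring.
Qed.

Lemma F_iter n f : F_thompson f -> F_thompson (Nat.iter n f).
Proof.
  intros Hf; induction n as [|n IH]; [apply gen_id|].
  exact (gen_comp _ f _ Hf IH).
Qed.

Lemma iter_fixed n (f : R -> R) t : f t = t -> Nat.iter n f t = t.
Proof. intros H; induction n as [|n IH]; simpl; [|rewrite IH]; auto. Qed.

Lemma iter_cancel n (f g : R -> R) x :
  (forall y, f (g y) = y) -> Nat.iter n f (Nat.iter n g x) = x.
Proof.
  intros H; induction n as [|n IH]; [reflexivity|].
  now rewrite Nat.iter_succ_r; simpl; rewrite H.
Qed.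

Lemma iter_a_gen n t : Nat.iter n a_gen t = t + INR n.
Proof.
  induction n as [|n IH]; simpl Nat.iter; [simpl; ring|].
  rewrite IH, S_INR; unfold a_gen; ring.
Qed.

Lemma iter_a_inv n t : Nat.iter n a_inv t = t - INR n.
Proof.
  induction n as [|n IH]; simpl Nat.iter; [simpl; ring|].
  rewrite IH, S_INR; unfold a_inv; ring.
Qed.

Lemma b_inv_iter_le1 n t : 0 <= t <= INR n + 1 -> 0 <= Nat.iter n b_inv t <= 1.
Proof.
  revert t; induction n as [|n IH]; intros t Ht; [simpl in *; lra|].
  rewrite Nat.iter_succ_r; apply IH; rewrite S_INR in Ht; pose proof (pos_INR n).
  pose proof (b_inv_mono_lip 0 t ltac:(lra)) as Hmono0; rewrite b_inv_zero in Hmono0.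
  destruct (Rle_dec t 2).
  - pose proof (b_inv_mono_lip t 2 r) as Hmono2.
    rewrite b_inv_two in Hmono2; lra.
  - rewrite b_inv_ge2; lra.
Qed.

Lemma b_inv_iter_small k t : 0 <= t <= 1 -> 0 <= Nat.iter k b_inv t <= / (INR k + 1).
Proof.
  intros Ht; induction k as [|k IH]; [simpl; rewrite Rplus_0_l, Rinv_1; lra|].
  simpl Nat.iter; rewrite S_INR; pose proof (pos_INR k).
  assert (/ (INR k + 1) <= 1) by (rewrite <- Rinv_1; apply Rinv_le_contravar; lra).
  pose proof (b_inv_mono_lip 0 (Nat.iter k b_inv t) ltac:(lra)) as Hmono.
  pose proof (b_inv_contract_first 0 (Nat.iter k b_inv t) (INR k + 1)) as Hcontract.
  rewrite b_inv_zero, !Rminus_0_r in Hmono, Hcontract; split; [lra|]; apply Hcontract; lra.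
Qed.

Lemma b_inv_neg_nonneg t : 0 <= t -> b_inv_neg t = t.
Proof. intros; unfold b_inv_neg, a_inv, a_gen; rewrite b_inv_ge2; lra. Qed.

Lemma b_inv_neg_shift t : b_inv_neg t = b_inv (t + 2) - 1.
Proof. unfold b_inv_neg, a_inv, a_gen; do 2 f_equal; ring. Qed.

Lemma b_inv_neg_iter_ge_m1 n t : - (INR n + 1) <= t <= 0 -> -1 <= Nat.iter n b_inv_neg t <= 0.
Proof.
  revert t; induction n as [|n IH]; intros t Ht; [simpl in *; lra|].
  rewrite Nat.iter_succ_r; apply IH; rewrite S_INR in Ht; pose proof (pos_INR n).
  rewrite b_inv_neg_shift.
  destruct (Rle_dec (t + 2) 0); [rewrite b_inv_nonpos; lra|].
  pose proof (b_inv_mono_lip 0 (t + 2) ltac:(lra)) as Hmono0.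
  pose proof (b_inv_mono_lip (t + 2) 2 ltac:(lra)) as Hmono2.
  rewrite b_inv_zero in Hmono0; rewrite b_inv_two in Hmono2; lra.
Qed.

Lemma b_inv_neg_iter_small k t : -1 <= t <= 0 ->
  - / (INR k + 1) <= Nat.iter k b_inv_neg t <= 0.
Proof.
  intros Ht; induction k as [|k IH]; [simpl; rewrite Rplus_0_l, Rinv_1; lra|].
  simpl Nat.iter; rewrite S_INR, b_inv_neg_shift; pose proof (pos_INR k).
  assert (/ (INR k + 1) <= 1) by (rewrite <- Rinv_1; apply Rinv_le_contravar; lra).
  pose proof (b_inv_mono_lip (Nat.iter k b_inv_neg t + 2) 2 ltac:(lra)) as Hmono.
  pose proof (b_inv_contract_second (Nat.iter k b_inv_neg t + 2) 2 (INR k + 1)) as Hcontract.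
  rewrite b_inv_two in Hmono, Hcontract.
  split; [|lra].
  enough (1 - b_inv (Nat.iter k b_inv_neg t + 2) <= / (INR k + 1 + 1)) by lra.
  apply Hcontract; lra.
Qed.

(** * Squeezing elements of [F'] *)

Definition squeezable (x : R) : Prop :=
  forall M eps, 0 < eps ->
  exists p, F_comm p /\ forall t, -M <= t <= M -> Rabs (p t - x) < eps.

Lemma exists_inv_INR_lt eps : 0 < eps -> exists k : nat, / (INR k + 1) < eps.
Proof.
  intros He; destruct (INR_archimed eps 1 He) as [k Hk]; exists k.
  pose proof (pos_INR k).
  apply Rmult_lt_reg_r with (INR k + 1); [lra|].
  rewrite Rinv_l by lra; nra.
Qed.

Lemma exists_INR_ge x : exists n : nat, x <= INR n.
Proof. destruct (INR_archimed 1 x) as [n Hn]; [lra|]; exists n; lra. Qed.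

(* [b_inv^(k+N)] squeezes [[0, N+1]] into [[0, 1/(k+1)]] and fixes the negative reals;
   [b_inv_neg^(k+N)] does the same on the other side. By [commutator_agrees_on], elements
   of [F'] agree with both maps on [[-N, N]]. *)
Lemma squeezable_zero : squeezable 0.
Proof.
  intros M eps He.
  destruct (exists_INR_ge (Rabs M + 1)) as [N HN].
  destruct (exists_inv_INR_lt eps He) as [k Hk].
  pose proof (pos_INR k); pose proof (Rabs_le_between M (Rabs M) (Rle_refl _)).
  assert (Hsmall : / (INR k + 1) <= 1) by (rewrite <- Rinv_1; apply Rinv_le_contravar; lra).
  assert (Ea1 : forall x, Nat.iter N a_inv (Nat.iter N a_gen x) = x)
    by (intros; apply iter_cancel; intros; unfold a_inv, a_gen; ring).
  assert (Ea2 : forall x, Nat.iter N a_gen (Nat.iter N a_inv x) = x)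
    by (intros; apply iter_cancel; intros; unfold a_inv, a_gen; ring).
  set (W := fun t => - INR N <= t <= INR N).
  destruct (commutator_agrees_on F_thompson W (Nat.iter (k + N) b_inv)
              (Nat.iter (k + N) b_gen) (Nat.iter N a_inv) (Nat.iter N a_gen))
    as [P1 [HP1 EP1]];
    [apply F_iter, F_b_gen|apply F_iter, F_a_inv
    |intros; apply iter_cancel, b_gen_b_inv|intros; apply iter_cancel, b_inv_b_gen
    |assumption|assumption
    |intros t Ht; unfold W in Ht; rewrite iter_a_inv; apply iter_fixed, b_inv_nonpos; lra|].
  destruct (commutator_agrees_on F_thompson W (Nat.iter (k + N) b_inv_neg)
              (Nat.iter (k + N) b_gen_neg) (Nat.iter N a_gen) (Nat.iter N a_inv))
    as [P2 [HP2 EP2]];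
    [apply F_iter, F_b_gen_neg|apply F_iter, F_a_gen
    |intros; apply iter_cancel, b_gen_neg_b_inv_neg|intros; apply iter_cancel, b_inv_neg_b_gen_neg
    |assumption|assumption
    |intros t Ht; unfold W in Ht; rewrite iter_a_gen; apply iter_fixed, b_inv_neg_nonneg; lra|].
  exists (fun t => P1 (P2 t)); split; [apply gen_comp; apply gen_incl; auto|].
  intros t Ht.
  assert (Hbound : - / (INR k + 1) <= P1 (P2 t) <= / (INR k + 1)).
  { rewrite EP2 by (unfold W; lra).
    destruct (Rle_dec t 0).
    - rewrite Nat.iter_add.
      pose proof (b_inv_neg_iter_small k _ (b_inv_neg_iter_ge_m1 N t ltac:(lra))).
      rewrite EP1 by (unfold W; lra).
      rewrite iter_fixed by (apply b_inv_nonpos; lra); lra.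
    - rewrite iter_fixed by (apply b_inv_neg_nonneg; lra).
      rewrite EP1, Nat.iter_add by (unfold W; lra).
      pose proof (b_inv_iter_small k _ (b_inv_iter_le1 N t ltac:(lra))); lra. }
  rewrite Rminus_0_r; apply Rabs_def1; lra.
Qed.

Section Squeezable.

Variable Gamma : (R -> R) -> Prop.
Hypothesis HG : is_subgroup Gamma.
Hypothesis HF : forall f, F_comm f -> Gamma f.

Lemma F_comm_conj g gi p : F_thompson g -> F_thompson gi ->
  (forall x, gi (g x) = x) -> (forall x, g (gi x) = x) ->
  F_comm p -> F_comm (fun x => gi (p (g x))).
Proof.
  intros Fg Fgi Eg1 Eg2; apply (gen_conj _ Gamma); auto.
  - intros s Hs; apply HF, gen_incl; auto.
  - intros s; apply commutators_conj; auto; apply gen_comp.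
Qed.

Lemma squeezable_conj g gi x : F_thompson g -> F_thompson gi ->
  (forall x, gi (g x) = x) -> (forall x, g (gi x) = x) ->
  (forall t, Rabs (g t - t) <= 1) -> (forall y z, Rabs (gi y - gi z) <= Rabs (y - z)) ->
  squeezable (g x) -> squeezable x.
Proof.
  intros Fg Fgi Eg1 Eg2 Hg Hgi Hx M eps He.
  destruct (Hx (Rabs M + 1) eps He) as [p [Hp Hclose]].
  exists (fun t => gi (p (g t))); split; [now apply F_comm_conj|].
  intros t Ht; rewrite <- (Eg1 x).
  eapply Rle_lt_trans; [apply Hgi|]; apply Hclose.
  pose proof (Rabs_le_between _ _ (Hg t)); pose proof (Rabs_le_between M (Rabs M) (Rle_refl _)).
  lra.
Qed.

Lemma squeezable_succ x : squeezable x -> squeezable (x + 1).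
Proof.
  intros Hx; apply (squeezable_conj a_inv a_gen); auto using F_a_inv, F_a_gen.
  - intros; unfold a_inv, a_gen; ring.
  - intros; unfold a_inv, a_gen; ring.
  - intros; unfold a_inv; apply Rabs_le; lra.
  - intros; unfold a_gen; replace (y + 1 - (z + 1)) with (y - z) by ring; lra.
  - unfold a_inv; now replace (x + 1 - 1) with x by ring.
Qed.

Lemma squeezable_pred x : squeezable (x + 1) -> squeezable x.
Proof.
  intros Hx; apply (squeezable_conj a_gen a_inv); auto using F_a_inv, F_a_gen.
  - intros; unfold a_inv, a_gen; ring.
  - intros; unfold a_inv, a_gen; ring.
  - intros; unfold a_gen; apply Rabs_le; lra.
  - intros; unfold a_inv; replace (y - 1 - (z - 1)) with (y - z) by ring; lra.
Qed.

Lemma squeezable_b_inv x : squeezable x -> squeezable (b_inv x).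
Proof.
  intros Hx; apply (squeezable_conj b_gen b_inv); auto using F_b_gen, F_b_inv.
  - exact b_inv_b_gen.
  - exact b_gen_b_inv.
  - exact b_gen_displacement.
  - exact b_inv_lipschitz.
  - now rewrite b_gen_b_inv.
Qed.

Lemma squeezable_closed x :
  (forall eta, 0 < eta -> exists y, squeezable y /\ Rabs (x - y) < eta) -> squeezable x.
Proof.
  intros Hx M eps He.
  destruct (Hx (eps / 2) ltac:(lra)) as [y [Hy Hxy]].
  destruct (Hy M (eps / 2) ltac:(lra)) as [p [Hp Hclose]].
  exists p; split; auto; intros t Ht.
  specialize (Hclose t Ht); apply Rabs_def2 in Hclose; apply Rabs_def2 in Hxy.
  apply Rabs_def1; lra.
Qed.

(* Pull back along [b], which maps [[0,1/2]] onto [[0,1]] and [[1/2,1]] onto [[1,2]];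
   [b_inv] contracts both intervals, so the brackets shrink like [1/(k+1)]. *)
Lemma squeezable_bracket k x : 0 <= x <= 1 ->
  exists u v, squeezable u /\ squeezable v /\ 0 <= u <= x /\ x <= v <= 1 /\
    v - u <= / (INR k + 1).
Proof.
  revert x; induction k as [|k IH]; intros x Hx.
  - exists 0, 1; simpl; rewrite Rplus_0_l, Rinv_1.
    pose proof (squeezable_succ 0 squeezable_zero) as H1; rewrite Rplus_0_l in H1.
    repeat split; auto using squeezable_zero; lra.
  - rewrite S_INR; pose proof (pos_INR k).
    destruct (Rle_dec x (1 / 2)).
    + assert (Hy : 0 <= b_gen x <= 1) by
        (rewrite b_gen_first by lra; split; [apply Rdiv_le_r|apply Rdiv_le_l]; lra).
      destruct (IH _ Hy) as [u [v [Hu [Hv [Hux [Hxv Huv]]]]]].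
      pose proof (b_inv_mono_lip 0 u ltac:(lra)) as M0.
      pose proof (b_inv_mono_lip u (b_gen x) ltac:(lra)) as M1.
      pose proof (b_inv_mono_lip (b_gen x) v ltac:(lra)) as M2.
      pose proof (b_inv_mono_lip v 1 ltac:(lra)) as M3.
      rewrite b_inv_b_gen in M1, M2; rewrite b_inv_zero in M0; rewrite b_inv_one in M3.
      pose proof (b_inv_contract_first u v (INR k + 1) ltac:(lra) ltac:(lra) ltac:(lra) Huv).
      exists (b_inv u), (b_inv v).
      repeat split; try apply squeezable_b_inv; auto; lra.
    + assert (Hy : 1 <= b_gen x <= 2) by
        (rewrite b_gen_second by lra; split; [apply Rdiv_le_r|apply Rdiv_le_l]; lra).
      destruct (IH (b_gen x - 1) ltac:(lra)) as [u [v [Hu [Hv [Hux [Hxv Huv]]]]]].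
      pose proof (b_inv_mono_lip 1 (u + 1) ltac:(lra)) as M0.
      pose proof (b_inv_mono_lip (u + 1) (b_gen x) ltac:(lra)) as M1.
      pose proof (b_inv_mono_lip (b_gen x) (v + 1) ltac:(lra)) as M2.
      pose proof (b_inv_mono_lip (v + 1) 2 ltac:(lra)) as M3.
      rewrite b_inv_b_gen in M1, M2; rewrite b_inv_one in M0; rewrite b_inv_two in M3.
      pose proof (b_inv_contract_second (u + 1) (v + 1) (INR k + 1)
                    ltac:(lra) ltac:(lra) ltac:(lra) ltac:(lra)).
      exists (b_inv (u + 1)), (b_inv (v + 1)).
      repeat split; try apply squeezable_b_inv, squeezable_succ; auto; lra.
Qed.

Lemma squeezable_unit_interval x : 0 <= x <= 1 -> squeezable x.
Proof.
  intros Hx; apply squeezable_closed; intros eta He.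
  destruct (exists_inv_INR_lt eta He) as [k Hk].
  destruct (squeezable_bracket k x Hx) as [u [v [Hu [_ [Hux [Hxv Huv]]]]]].
  exists u; split; auto; apply Rabs_def1; lra.
Qed.

Lemma squeezable_all x : squeezable x.
Proof.
  assert (Hn : forall n : nat, forall x, - INR n <= x <= INR n + 1 -> squeezable x).
  { induction n as [|n IH]; intros y Hy.
    - apply squeezable_unit_interval; simpl in Hy; lra.
    - rewrite S_INR in Hy; destruct (Rle_dec y (INR n + 1)); [destruct (Rle_dec (- INR n) y)|].
      + apply IH; lra.
      + apply squeezable_pred, IH; pose proof (pos_INR n); lra.
      + replace y with (y - 1 + 1) by ring; apply squeezable_succ, IH; pose proof (pos_INR n); lra. }
  destruct (exists_INR_ge (Rabs x)) as [n Hn'].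
  apply (Hn n); pose proof (Rabs_le_between x (Rabs x) (Rle_refl _)); lra.
Qed.

End Squeezable.

(** * Simplicity of [Gamma'] *)

Lemma displaced_interval f x0 : continuity f -> f x0 <> x0 ->
  exists d, 0 < d /\ forall t, x0 - d < t < x0 + d -> ~ (x0 - d < f t < x0 + d).
Proof.
  intros Hf Hx0.
  set (D := Rabs (f x0 - x0)).
  assert (HD : 0 < D) by (apply Rabs_pos_lt; lra).
  destruct (Hf x0 (D / 2) ltac:(lra)) as [d0 [Hd0 Hclose]].
  exists (Rmin d0 (D / 2)); split; [apply Rmin_pos; lra|].
  pose proof (Rmin_l d0 (D / 2)); pose proof (Rmin_r d0 (D / 2)).
  intros t Ht Hft.
  assert (Hft0 : Rabs (f t - f x0) < D / 2).
  { destruct (Req_dec t x0) as [->|Hne]; [rewrite Rminus_diag, Rabs_R0; lra|].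
    apply Hclose; split; [split; [exact I|auto]|].
    simpl; unfold Rdist; apply Rabs_def1; lra. }
  apply Rabs_def2 in Hft0; unfold D in *.
  destruct (Rcase_abs (f x0 - x0)); [rewrite Rabs_left in *|rewrite Rabs_right in *]; lra.
Qed.

Lemma exists_moved_point (f : R -> R) : f <> (fun x => x) -> exists x, f x <> x.
Proof.
  intros Hf; apply NNPP; intro Hall; apply Hf, functional_extensionality; intro x.
  apply NNPP; intro Hx; apply Hall; now exists x.
Qed.

Section CommutatorSubgroup.

Variable Gamma : (R -> R) -> Prop.
Hypothesis HG : is_subgroup Gamma.
Hypothesis Hcs : forall f, Gamma f -> compactly_supported f.
Hypothesis HF : forall f, F_comm f -> Gamma f.

Lemma comm_subgroup_agrees p M : Gamma p ->
  exists ph, comm_subgroup Gamma ph /\ forall t, -M <= t <= M -> ph t = p t.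
Proof.
  intros Hp; destruct (Hcs p Hp) as [K HK].
  (* [r] pushes [[-M, M]] off the support of [p]. *)
  destruct (squeezable_all Gamma HG HF (Rabs K + 2) M 1 Rlt_0_1) as [r [Hr Hclose]].
  destruct (subgroup_has_inv Gamma HG p Hp) as [pi [Hpi [Ep1 Ep2]]].
  destruct (subgroup_has_inv Gamma HG r (HF r Hr)) as [ri [_ [Er1 Er2]]].
  destruct (commutator_agrees_on Gamma (fun t => -M <= t <= M) p pi r ri)
    as [ph [Hph Eph]]; auto.
  - intros t Ht; apply HK; specialize (Hclose t Ht); apply Rabs_def2 in Hclose.
    pose proof (Rle_abs K); pose proof (Rle_abs (r t)); lra.
  - exists ph; split; [now apply gen_incl|auto].
Qed.

Lemma comm_subgroup_squeezes M x eps : 0 < eps ->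
  exists p, comm_subgroup Gamma p /\ forall t, -M <= t <= M -> x - eps < p t < x + eps.
Proof.
  intros He; destruct (squeezable_all Gamma HG HF x M eps He) as [p [Hp Hclose]].
  destruct (comm_subgroup_agrees p M (HF p Hp)) as [ph [Hph Eph]].
  exists ph; split; auto; intros t Ht.
  rewrite Eph by auto; specialize (Hclose t Ht); apply Rabs_def2 in Hclose; lra.
Qed.

Lemma comm_subgroup_nontrivial : exists f, comm_subgroup Gamma f /\ f <> (fun x => x).
Proof.
  destruct (comm_subgroup_squeezes 0 1 1 Rlt_0_1) as [p [Hp Hpb]].
  exists p; split; auto; intro E.
  specialize (Hpb 0 ltac:(lra)); rewrite E in Hpb; lra.
Qed.

Lemma comm_subgroup_commutator_in_normal N n (U : R -> Prop) x0 d :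
  normal_in N (comm_subgroup Gamma) -> N n -> 0 < d ->
  (forall t, x0 - d < t < x0 + d -> U t) -> (forall t, U t -> ~ U (n t)) ->
  forall u ui v vi, comm_subgroup Gamma u -> comm_subgroup Gamma v ->
  (forall x, ui (u x) = x) -> (forall x, u (ui x) = x) ->
  (forall x, vi (v x) = x) -> (forall x, v (vi x) = x) ->
  N (fun x => ui (vi (u (v x)))).
Proof.
  intros HN Nn Hd HU Hdisp u ui v vi Gu Gv Eu1 Eu2 Ev1 Ev2.
  pose proof (comm_subgroup_is_subgroup Gamma HG) as HG'.
  destruct (Hcs u (comm_subgroup_sub Gamma u HG Gu)) as [Ku HKu].
  destruct (Hcs v (comm_subgroup_sub Gamma v HG Gv)) as [Kv HKv].
  pose proof (Rabs_pos Ku); pose proof (Rabs_pos Kv).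
  set (S := fun t => - (Rabs Ku + Rabs Kv) <= t <= Rabs Ku + Rabs Kv).
  assert (Su : supported_in S u) by (apply (supported_in_interval u Ku); auto; lra).
  assert (Sv : supported_in S v) by (apply (supported_in_interval v Kv); auto; lra).
  destruct (comm_subgroup_squeezes (Rabs Ku + Rabs Kv) x0 d Hd) as [p [Hp Hpd]].
  destruct (subgroup_has_inv _ HG' p Hp) as [pi [Hpi [Ep1 Ep2]]].
  assert (HSU : forall t, S t -> U (p t)) by (intros; apply HU, Hpd; auto).
  assert (Gconj : forall w, comm_subgroup Gamma w -> comm_subgroup Gamma (fun x => p (w (pi x))))
    by (intros; apply (subgroup_comp _ HG'); auto; apply (subgroup_comp _ HG'); auto).
  pose proof (commutator_in_normal_of_displaced _ N U n HN Nn Hdisp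
     (fun x => p (u (pi x))) (fun x => p (ui (pi x)))
     (fun x => p (v (pi x))) (fun x => p (vi (pi x))) (Gconj u Gu) (Gconj v Gv))
    as Hc.
  destruct HN as [_ [_ Hnorm]].
  replace (fun x => ui (vi (u (v x)))) with
    (fun x => pi (p (ui (pi (p (vi (pi (p (u (pi (p (v (pi (p x)))))))))))))).
  - apply (Hnorm p pi (fun x => p (ui (pi (p (vi (pi (p (u (pi (p (v (pi x))))))))))))); auto.
    apply Hc; try (intro; cbv beta; now rewrite Ep1, ?Eu1, ?Eu2, ?Ev1, ?Ev2, Ep2);
      now apply (supported_in_conj S).
  - apply functional_extensionality; intro; now rewrite !Ep1.
Qed.

(* Perturb [g] and [h] by [Y = p g^-1 p^-1] and [Z = q h^-1 q^-1], supported on disjoint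
   translates [p S], [q S] of their common support [S]: then [g Y] and [h Z] are commutators,
   hence lie in [Gamma'], and [[g Y, h Z] = [g, h]]. *)
Lemma commutators_in_normal (N : (R -> R) -> Prop) :
  (forall u ui v vi, comm_subgroup Gamma u -> comm_subgroup Gamma v ->
     (forall x, ui (u x) = x) -> (forall x, u (ui x) = x) ->
     (forall x, vi (v x) = x) -> (forall x, v (vi x) = x) ->
     N (fun x => ui (vi (u (v x))))) ->
  forall f, commutators Gamma f -> N f.
Proof.
  intros HN f [g [gi [h [hi [Hg [Hh [Eg1 [Eg2 [Eh1 [Eh2 ->]]]]]]]]]].
  destruct (Hcs g Hg) as [Kg HKg]; destruct (Hcs h Hh) as [Kh HKh].
  pose proof (Rabs_pos Kg); pose proof (Rabs_pos Kh).
  set (K := Rabs Kg + Rabs Kh).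
  set (S := fun t => - K <= t <= K).
  assert (Sg : supported_in S g) by (apply (supported_in_interval g Kg); auto; unfold K; lra).
  assert (Sh : supported_in S h) by (apply (supported_in_interval h Kh); auto; unfold K; lra).
  destruct (comm_subgroup_squeezes K (K + 2) 1 Rlt_0_1) as [p [Hp Hpb]].
  destruct (comm_subgroup_squeezes K (K + 6) 1 Rlt_0_1) as [q [Hq Hqb]].
  apply (comm_subgroup_sub Gamma p HG) in Hp; apply (comm_subgroup_sub Gamma q HG) in Hq.
  destruct (subgroup_has_inv Gamma HG p Hp) as [pi [Hpi [Ep1 Ep2]]].
  destruct (subgroup_has_inv Gamma HG q Hq) as [qi [Hqi [Eq1 Eq2]]].
  assert (Hgi : Gamma gi) by (now apply (subgroup_inv Gamma HG g)).
  assert (Hhi : Gamma hi) by (now apply (subgroup_inv Gamma HG h)).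
  set (A := fun t => K + 1 < t < K + 3).
  set (B := fun t => K + 5 < t < K + 7).
  assert (HA : forall t, S t -> A (p t)) by (intros t Ht; specialize (Hpb t Ht); unfold A; lra).
  assert (HB : forall t, S t -> B (q t)) by (intros t Ht; specialize (Hqb t Ht); unfold B; lra).
  replace (fun x => gi (hi (g (h x)))) with
    (fun x => p (g (pi (gi (q (h (qi (hi (g (p (gi (pi (h (q (hi (qi x)))))))))))))))).
  - apply (HN (fun x => g (p (gi (pi x)))) (fun x => p (g (pi (gi x))))
               (fun x => h (q (hi (qi x)))) (fun x => q (h (qi (hi x))))).
    + apply gen_incl; exists gi, g, pi, p; repeat split; auto.
    + apply gen_incl; exists hi, h, qi, q; repeat split; auto.
    + intro; now rewrite Eg1, Ep1, Eg2, Ep2.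
    + intro; now rewrite Ep1, Eg1, Ep2, Eg2.
    + intro; now rewrite Eh1, Eq1, Eh2, Eq2.
    + intro; now rewrite Eq1, Eh1, Eq2, Eh2.
  - apply functional_extensionality; intro x.
    apply (commutator_of_disjoint_perturbations S A B g gi h hi
             (fun x => p (gi (pi x))) (fun x => p (g (pi x)))
             (fun x => q (hi (qi x))) (fun x => q (h (qi x))));
      try (intros; unfold S, A, B in *; lra); auto;
      try (intro; now rewrite ?Ep1, ?Eq1, ?Eg1, ?Eg2, ?Eh1, ?Eh2, ?Ep2, ?Eq2);
      now apply supported_in_conj with S; [| |apply (supported_in_inv S g) + apply (supported_in_inv S h)].
Qed.

End CommutatorSubgroup.

Theorem mainTheorem8 (Gamma : (R -> R) -> Prop)
  (HG : is_subgroup Gamma)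
  (Hcs : forall f, Gamma f -> compactly_supported f)
  (HF : forall f, F_comm f -> Gamma f) :
  simple_group (comm_subgroup Gamma).
Proof.
  split; [now apply comm_subgroup_nontrivial|].
  intros N HN.
  destruct (classic (forall f, N f -> f = (fun x => x))) as [Htriv|Hntriv]; [now left|right].
  destruct (not_all_ex_not _ _ Hntriv) as [n Hn].
  destruct (imply_to_and _ _ Hn) as [Nn Hn_id].
  destruct (exists_moved_point n Hn_id) as [x0 Hx0].
  assert (Hcont : continuity n)
    by (apply HG, (comm_subgroup_sub Gamma n HG), (proj1 (proj2 HN)), Nn).
  destruct (displaced_interval n x0 Hcont Hx0) as [d [Hd Hdisp]].
  intros f Hf; apply (gen_min (commutators Gamma) N f (proj1 HN)); auto.
  apply commutators_in_normal; auto.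
  intros; apply (comm_subgroup_commutator_in_normal Gamma HG Hcs HF N n
                   (fun t => x0 - d < t < x0 + d) x0 d); auto.
Qed.
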